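(* Let $M$ be a distance-based tree reconstruction method and suppose that for each $n$ it has $l_\infty$ safety radius $\rho_n>0$ on binary trees with $n$ leaves. Then for every $\eta>0$ and every $n$ there is $s_n>0$ such that $M$ has $\eta$-stochastic safety radius (at least) $s_n$ for all binary phylogenetic trees with $n$ leaves. Moreover, $s_n$ can be taken arbitrarily close to $\frac12\rho_n$ as $n\to\infty$: for every $\eta>0$ and every $\theta\in(0,1)$ there exists $N$ such that for all $n\ge N$, $M$ has $\eta$-stochastic safety radius at least $\theta\cdot\frac12\rho_n$ for all binary phylogenetic trees with $n$ leaves.
   Context: A phylogenetic $X$-tree is a tree whose leaves are bijectively labelled by the finite set $X$ and whose interior vertices have degree at least 3; it is binary if all interior vertices have degree 3. For a binary phylogenetic $X$-tree $T$ with positive edge lengths $w$, $d_{(T,w)}$ denotes the tree metric (path-length distance between leaves) and $w_{\min}$ the minimum length of an interior (non-pendant) edge. A distance-based tree reconstruction method $M$ assigns (measurably) to every finite set $X$ and every dissimilarity map $\delta:\{\{x,y\}:x\ne y\in X\}\to\mathbb{R}$ a phylogenetic $X$-tree topology $M(\delta)$; $M(\delta)=T$ means equality of (unrooted) topologies. $M$ has $l_\infty$ safety radius $\rho_n$ (on $n$-leaf trees) if for every binary phylogenetic $X$-tree $T$ with $|X|=n$ and positive edge lengths $w$, and every dissimilarity map $\delta$ on $X$, $\max_{x\ne y}|\delta(x,y)-d_{(T,w)}(x,y)|<\rho_n w_{\min}$ implies $M(\delta)=T$. Random errors model: $\delta(x,y)=d_{(T,w)}(x,y)+\epsilon_{xy}$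 with the $\epsilon_{xy}$ (one per unordered pair) independent $N(0,\sigma^2)$, where $\sigma^2=c^2/\log(n)$ for some $c\ne 0$ and $n=|X|$ ($\log$ the natural logarithm). For $\eta>0$, $M$ has $\eta$-stochastic safety radius $s$ (on $n$-leaf trees) if for every binary phylogenetic $X$-tree $T$ with $|X|=n$ and positive edge lengths, and $\delta$ drawn from the random errors model with parameter $c$, $c<s\cdot w_{\min}$ implies $\mathbb{P}(M(\delta)=T)\ge 1-\eta$. *)

From HB Require Import structures.
From mathcomp Require Import all_boot all_order all_algebra.
From mathcomp Require Import all_classical all_reals all_analysis.
Unset Printing Implicit Defensive.
Import Order.TTheory GRing.Theory Num.Theory.
Local Open Scope classical_set_scope.
Local Open Scope ring_scope.

(** A finite simple graph on [V] given by a symmetric irreflexive relation. *)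
Definition deg {V : finType} (adj : rel V) (v : V) : nat := #|[set u | adj v u]%SET|.

Definition adj_minus {V : finType} (adj : rel V) (e : {set V}) : rel V :=
  fun a b => adj a b && ([set a; b]%SET != e).

Definition is_edge {V : finType} (adj : rel V) (e : {set V}) : bool :=
  [exists u, exists v, adj u v && (e == [set u; v]%SET)].

(** a tree: connected, and every edge is a bridge (minimally connected) *)
Definition is_tree {V : finType} (adj : rel V) : Prop :=
  symmetric adj /\ irreflexive adj /\
  (forall a b, connect adj a b) /\
  (forall u v, adj u v -> ~~ connect (adj_minus adj [set u; v]%SET) u v).

Record phylo_tree (X : finType) := PhyloTree {
  vert : finType;
  adj : rel vert;
  lab : X -> vert;
  adj_tree : is_tree adj;
  lab_inj : injective lab;
  leaf_lab : forall v, (deg adj v <= 1)%N <-> v \in codom lab;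
  interior_deg : forall v, v \notin codom lab -> (3 <= deg adj v)%N
}.
Arguments vert {X} p.
Arguments adj {X} p.
Arguments lab {X} p.

Definition binary {X : finType} (T : phylo_tree X) : Prop :=
  forall v, v \notin codom (lab T) -> deg (adj T) v = 3%N.

Definition same_topology {X : finType} (T1 T2 : phylo_tree X) : Prop :=
  exists f : vert T1 -> vert T2, bijective f /\
    (forall a b, adj T2 (f a) (f b) = adj T1 a b) /\
    (forall x, f (lab T1 x) = lab T2 x).

Definition pair2 (X : finType) := {S : {set X} | #|S| == 2%N}.

Definition dissim (R : realType) (X : finType) := pair2 X -> R.

Section metric.
Context {R : realType} {X : finType}.

(** edge lengths are functions on edges (2-sets of vertices); only values on
    edges matter *)
Definition edge_len (T : phylo_tree X) := {set vert T} -> R.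

Definition pos_lengths (T : phylo_tree X) (w : edge_len T) : Prop :=
  forall e, is_edge (adj T) e -> 0 < w e.

Definition interior_edge (T : phylo_tree X) (e : {set vert T}) : bool :=
  is_edge (adj T) e && [forall v in e, v \notin codom (lab T)].

(** w_min : minimal length of an interior edge (+oo if there is none) *)
Definition wmin (T : phylo_tree X) (w : edge_len T) : \bar R :=
  \big[Order.min/+oo%E]_(e | interior_edge T e) (w e)%:E.

(** the edge [e] lies on the path between vertices a and b iff it separates them *)
Definition separates (T : phylo_tree X) (e : {set vert T}) (a b : vert T) : bool :=
  ~~ connect (adj_minus (adj T) e) a b.


Definition tree_metric (T : phylo_tree X) (w : edge_len T) : dissim R X :=
  fun S => \sum_(e | is_edge (adj T) e &&
             [exists x in val S, exists y in val S, separates T e (lab T x) (lab T y)])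
            w e.

(** cylinder sets generating the product (Borel) sigma-algebra on dissim maps *)
Definition cylinders : set (set (dissim R X)) :=
  [set A | exists S (B : set R), measurable B /\ A = [set d | B (d S)]].

End metric.

Definition method (R : realType) := forall X : finType, @dissim R X -> phylo_tree X.

Definition method_measurable {R : realType} (M : method R) : Prop :=
  forall (X : finType) (T : phylo_tree X),
    <<s @cylinders R X>> [set d | same_topology (M X d) T].

Definition linf_safety_radius {R : realType} (M : method R) (n : nat) (rho : R) : Prop :=
  forall (X : finType) (T : phylo_tree X) (w : edge_len T),
    #|X| = n -> binary T -> pos_lengths T w ->
    forall d : dissim R X,
      (forall S, (`|d S - tree_metric T w S|%:E < rho%:E * wmin T w)%E) ->
      same_topology (M X d) T.

Definition random_errors {R : realType} {X : finType} (c : R)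
  {dO : measure_display} {Omega : measurableType dO} (P : probability Omega R)
  (eps : pair2 X -> Omega -> R) : Prop :=
  (forall S, measurable_fun setT (eps S)) /\
  (forall S (B : set R), measurable B ->
     P (eps S @^-1` B) = normal_prob 0 (Num.sqrt (c ^+ 2 / ln (#|X|%:R)))  B) /\
  (forall B : pair2 X -> set R, (forall S, measurable (B S)) ->
     P [set om | forall S, B S (eps S om)] = (\prod_(S : pair2 X) P (eps S @^-1` B S))%E).

Definition stoch_safety_radius {R : realType} (M : method R) (eta : R) (n : nat) (s : R) : Prop :=
  forall (X : finType) (T : phylo_tree X) (w : edge_len T),
    #|X| = n -> binary T -> pos_lengths T w ->
    forall c : R, 0 < c -> (c%:E < s%:E * wmin T w)%E ->
    forall (dO : measure_display) (Omega : measurableType dO) (P : probability Omega R)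
           (eps : pair2 X -> Omega -> R),
      random_errors c P eps ->
      ((1 - eta)%:E <= P [set om | same_topology (M X (fun S => (tree_metric T w S + eps S om)%R)) T])%E.

From HB Require Import structures.
From mathcomp Require Import all_boot all_order all_algebra.
From mathcomp Require Import all_classical all_reals all_analysis.
From mathcomp Require Import lra measurable_realfun ring.

(* If every error |eps_S| is below rho * w_min, the l_infty safety radius forces
   M to recover T. Each eps_S is N(0, c^2 / log n); comparing its density with
   that of N(0, t^2 c^2 / log n) gives, for every t >= 1, the tail bound
   P(|eps_S| >= rho w_min) <= t exp(-(1 - t^-2) (rho w_min / c)^2 log n / 2),
   and c < s w_min turns it into t n^(-(1 - t^-2) (rho / s)^2 / 2). A union
   bound over the fewer than n^2 pairs leaves a failure probability of at most
   t n^(2 - (1 - t^-2) (rho / s)^2 / 2): it is below eta when s is small enough,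
   and, for s = theta rho / 2 and t so large that 1 - t^-2 > theta^2, as soon
   as n is large. *)

Set Implicit Arguments.
Unset Strict Implicit.
Unset Printing Implicit Defensive.
Import Order.TTheory GRing.Theory Num.Theory.
Local Open Scope ring_scope.
Local Open Scope classical_set_scope.

Section gaussian_tail.
Context {R : realType}.
Local Notation mu := (@lebesgue_measure R).

Lemma normal_peak_scale (s t : R) : 0 < s -> 0 < t ->
  normal_peak s = t * normal_peak (s * t).
Proof.
move=> s0 t0; rewrite /normal_peak.
have -> : (s * t) ^+ 2 * pi *+ 2 = t ^+ 2 * (s ^+ 2 * pi *+ 2).
  by rewrite mulrnAr exprMn mulrA [t ^+ 2 * _]mulrC -mulrnAr.
by rewrite sqrtrM ?sqr_ge0 // sqrtr_sqr gtr0_norm // invfM mulrA mulfV ?gt_eqF // mul1r.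
Qed.

(* Away from [-a, a] the density of N(0, s^2) is dominated by a multiple of
   that of N(0, (s t)^2): split exp(-x^2/2s^2) using x^2 >= a^2 on a
   fraction 1 - t^-2 of the exponent. *)
Lemma normal_pdf0_le_scaled (s t a x : R) : 0 < s -> 1 <= t -> 0 <= a -> a <= `|x| ->
  normal_pdf 0 s x <=
  t * expR (- (1 - t ^-2) * (a / s) ^+ 2 / 2) * normal_pdf 0 (s * t) x.
Proof.
move=> s0 t1 a0 ax; have t0 : 0 < t by lra.
rewrite !normal_pdfE ?mulf_neq0 ?gt_eqF // /normal_fun subr0.
have tP : 0 < t * normal_peak (s * t).
  by rewrite mulr_gt0 ?normal_peak_gt0 ?mulf_neq0 ?gt_eqF.
rewrite (normal_peak_scale s0 t0) mulrACA ler_pM2l // -expRD ler_expR.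
have x2 : a ^+ 2 <= x ^+ 2 by rewrite -[x ^+ 2]real_normK ?num_real // ler_sqr ?nnegrE.
have -> : - (1 - t ^-2) * (a / s) ^+ 2 / 2 + - x ^+ 2 / ((s * t) ^+ 2 *+ 2) =
          (- (1 - t ^-2) * a ^+ 2 - t ^-2 * x ^+ 2) / (s ^+ 2 *+ 2).
  by field; rewrite ?gt_eqF.
rewrite ler_pM2r ?invr_gt0 ?mulrn_wgt0 ?exprn_gt0 //.
have : 0 <= t ^-2 <= 1.
  by rewrite invr_ge0 exprn_ge0 ?invf_le1 ?exprn_gt0 ?exprn_ege1 //; lra.
nra.
Qed.

Lemma measurable_norm_ge (a : R) : measurable [set x : R | a <= `|x|].
Proof.
have := @normr_measurable R setT measurableT `[a, +oo[%classic (measurable_itv _).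
by rewrite setTI; congr measurable; apply/seteqP; split => x /=; rewrite in_itv /= andbT.
Qed.

Lemma normal_prob0_tail_le (s t a : R) : 0 < s -> 1 <= t -> 0 <= a ->
  (normal_prob 0 s [set x | (a <= `|x|)%R] <=
   (t * expR (- (1 - t ^-2) * (a / s) ^+ 2 / 2))%:E)%E.
Proof.
move=> s0 t1 a0; set K := t * _.
have K0 : 0 <= K by rewrite mulr_ge0 ?expR_ge0 //; lra.
have mpdf (r : R) D : measurable_fun D (normal_pdf 0 r).
  exact: measurable_funS (measurable_normal_pdf _ _).
apply: (@le_trans _ _
  (\int[mu]_(x in [set x | (a <= `|x|)%R]) (K%:E * (normal_pdf 0 (s * t) x)%:E))%E).
  apply: ge0_le_integral => //.
  - exact: measurable_norm_ge.
  - by move=> x _; rewrite lee_fin normal_pdf_ge0.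
  - by apply/measurable_EFinP; apply: mpdf.
  - by apply/measurable_EFinP; apply: measurable_funM => //; apply: mpdf.
  - by move=> x ax; rewrite lee_fin; exact: normal_pdf0_le_scaled.
rewrite ge0_integralZl ?lee_fin //; first last.
- by move=> x _; rewrite lee_fin normal_pdf_ge0.
- by apply/measurable_EFinP; apply: mpdf.
- exact: measurable_norm_ge.
rewrite -[leRHS]mule1 lee_wpmul2l ?lee_fin // -(integral_normal_pdf 0 (s * t)).
apply: ge0_subset_integral => //.
- exact: measurable_norm_ge.
- by apply/measurable_EFinP; apply: mpdf.
- by move=> x _; rewrite lee_fin normal_pdf_ge0.
Qed.

End gaussian_tail.

Lemma measurable_preimage_g_sigma d (Om : measurableType d) (A : Type)
    (G : set (set A)) (f : Om -> A) :
  (forall B, G B -> measurable (f @^-1` B)) ->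
  forall B, <<s G>> B -> measurable (f @^-1` B).
Proof.
move=> HG B HB; apply: (HB [set B | measurable (f @^-1` B)]); split => //.
split => /=.
- by rewrite preimage_set0.
- by move=> C mC; rewrite setTD preimage_setC; exact: measurableC.
- by move=> F mF; rewrite preimage_bigcup; exact: bigcupT_measurable.
Qed.

Lemma fin_Boole_inequality d (T : measurableType d) (R : realType)
    (mu : {measure set T -> \bar R}) (I : finType) (F : I -> set T) :
  (forall i, measurable (F i)) ->
  (mu (\bigcup_i F i) <= \sum_(i : I) mu (F i))%E.
Proof.
move=> mF; rewrite -big_enum /=.
have -> : \bigcup_i F i = \big[setU/set0]_(i <- enum I) F i.
  rewrite -bigcup_seq; apply/seteqP; split => x /= [i _ Fi]; exists i => //.
  by rewrite /= mem_enum.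
elim: (enum I) => [|i r IH]; first by rewrite !big_nil measure0.
rewrite !big_cons; apply: le_trans (measureU2 _ _ _) _ => //.
  exact: bigsetU_measurable.
by rewrite leeD2l.
Qed.

Lemma prob_setCU_ge d (T : measurableType d) (R : realType) (P : probability T R)
    (I : finType) (F : I -> set T) (E : set T) (b : R) :
  (forall i, measurable (F i)) -> measurable E -> ~` (\bigcup_i F i) `<=` E ->
  (forall i, (P (F i) <= b%:E)%E) ->
  ((1 - #|I|%:R * b)%:E <= P E)%E.
Proof.
move=> mF mE FE Pb.
have mU : measurable (\bigcup_i F i).
  by apply: fin_bigcup_measurable => //; exact: finite_setT.
have PU : (P (\bigcup_i F i) <= (#|I|%:R * b)%:E)%E.
  apply: le_trans (fin_Boole_inequality P mF) _.
  apply: le_trans (lee_sum _ (fun i _ => Pb i)) _.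
  by rewrite sumEFin sumr_const mulr_natl.
apply: (@le_trans _ _ (P (~` \bigcup_i F i))); last first.
  by apply: le_measure => //; rewrite inE //; exact: measurableC.
rewrite probability_setC // -(fineK (fin_num_measure P _ mU)) -EFinB.
rewrite lee_fin lerD2l lerN2.
by rewrite -lee_fin fineK ?fin_num_measure.
Qed.

Lemma sqr_mul_expN_le (R : realType) (x t eta k : R) : 0 < x -> 0 < t -> 0 < eta ->
  2 * ln x + ln (t / eta) <= k -> x ^+ 2 * (t * expR (- k)) <= eta.
Proof.
move=> x0 t0 eta0; rewrite ln_div ?posrE // => hk.
rewrite -[x]lnK ?posrE // -[t]lnK ?posrE // -[leRHS]lnK ?posrE //.
by rewrite -expRM_natl -!expRD ler_expR; lra.
Qed.

Lemma sqr_div_le_sqr_div_sqrt (R : realType) (rho s W c L : R) :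
  0 < rho -> 0 < s -> 0 < c -> 0 < L -> c < s * W ->
  (rho / s) ^+ 2 * L <= (rho * W / Num.sqrt (c ^+ 2 / L)) ^+ 2.
Proof.
move=> rho0 s0 c0 L0 cW.
have W0 : 0 < W by rewrite -(pmulr_rgt0 _ s0); exact: lt_trans cW.
rewrite [in leRHS]expr_div_n sqr_sqrtr; last by rewrite divr_ge0 ?sqr_ge0 ?ltW.
rewrite invf_div mulrA [in leRHS]mulrAC -[in leRHS]expr_div_n ler_pM2r //.
rewrite ler_sqr ?nnegrE; last 2 first.
- by rewrite divr_ge0 ?ltW.
- by rewrite divr_ge0 ?mulr_ge0 ?ltW.
by rewrite ler_pdivrMr // mulrAC ler_pdivlMr // -mulrA ler_pM2l // mulrC ltW.
Qed.

Lemma card_mul_normal_tail_le (R : realType) (N n : nat) (rho s t eta W c : R) :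
  (N <= n ^ 2)%N -> (1 < n)%N -> 0 < rho -> 0 < s -> 1 <= t -> 0 < eta ->
  0 < c -> c < s * W ->
  ln (t / eta) <= ((1 - t ^-2) * (rho / s) ^+ 2 / 2 - 2) * ln n%:R ->
  N%:R * (t * expR (- (1 - t ^-2) * (rho * W / Num.sqrt (c ^+ 2 / ln n%:R)) ^+ 2 / 2))
    <= eta.
Proof.
move=> Nn n1 rho0 s0 t1 eta0 c0 cW rate.
have t0 : 0 < t by lra.
have n0 : 0 < (n%:R : R) by rewrite ltr0n (ltn_trans _ n1).
have L0 : 0 < ln (n%:R : R) by rewrite ln_gt0 // ltr1n.
set k := (1 - t ^-2) * ((rho / s) ^+ 2 * ln n%:R) / 2.
apply: (le_trans (y := n%:R ^+ 2 * (t * expR (- k)))).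
  apply: ler_pM.
  - exact: ler0n.
  - by rewrite mulr_ge0 ?expR_ge0 ?ltW.
  - by rewrite -natrX ler_nat.
  rewrite ler_pM2l // ler_expR !mulNr lerN2 ler_pM2r ?invr_gt0 //.
  apply: ler_wpM2l; first by rewrite subr_ge0 invf_le1 ?exprn_gt0 ?exprn_ege1.
  exact: sqr_div_le_sqr_div_sqrt.
apply: sqr_mul_expN_le => //.
have -> : k = ((1 - t ^-2) * (rho / s) ^+ 2 / 2 - 2) * ln n%:R + 2 * ln n%:R.
  by rewrite /k; ring.
lra.
Qed.

Section phylo_tree_facts.
Context {R : realType} {X : finType}.

Lemma wmin_pinfty_or_gt0 (T : phylo_tree X) (w : @edge_len R X T) :
  pos_lengths T w -> wmin T w = +oo%E \/ exists2 W : R, 0 < W & wmin T w = W%:E.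
Proof.
move=> wpos; rewrite /wmin.
apply: (big_ind (fun x : \bar R => x = +oo%E \/ exists2 W : R, 0 < W & x = W%:E)).
- by left.
- by move=> x y hx hy; rewrite /Order.min; case: ifP.
- by move=> e /andP[e_edge _]; right; exists (w e) => //; exact: wpos.
Qed.

Lemma pair2_void : (#|X| <= 1)%N -> pair2 X -> False.
Proof.
move=> X1 [S /eqP S2]; have := max_card S.
by rewrite S2 => /leq_trans/(_ X1).
Qed.

Lemma card_pair2_le : (#|{: pair2 X}| <= #|X| ^ 2)%N.
Proof.
rewrite card_sig (eq_card (B := [set A : {set X} | #|A| == 2]%SET)); last first.
  by move=> A; rewrite !inE.
rewrite card_draws bin2 leq_half_double -mulnn -addnn.
apply/leqW; exact: leq_trans (leq_mul (leqnn _) (leq_pred _)) (leq_addr _ _).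
Qed.

End phylo_tree_facts.

Section stochastic_safety.
Context {R : realType}.

Lemma recovery_of_small_errors (M : method R) (n : nat) (rho : R) (X : finType)
    (T : phylo_tree X) (w : edge_len T) (e : dissim R X) :
  linf_safety_radius M n rho -> #|X| = n -> binary T -> pos_lengths T w ->
  (forall S, (`|e S|%:E < rho%:E * wmin T w)%E) ->
  same_topology (M X (fun S => tree_metric T w S + e S)) T.
Proof.
move=> safe Xn Tbin wpos small; apply: (safe _ _ w) => // S.
by rewrite addrAC subrr add0r.
Qed.

Lemma measurable_recovery_event (M : method R) (X : finType) (T : phylo_tree X)
    (w : edge_len T) dO (Om : measurableType dO) (eps : pair2 X -> Om -> R) :
  method_measurable M -> (forall S, measurable_fun setT (eps S)) ->
  measurable [set om | same_topology (M X (fun S => tree_metric T w S + eps S om)) T].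
Proof.
move=> M_meas meps.
pose d om S := tree_metric T w S + eps S om.
apply: (measurable_preimage_g_sigma (f := d) _ (M_meas X T)).
move=> _ [S [B [mB ->]]].
rewrite -[_ @^-1` _]setTI.
exact: (measurable_funD (measurable_cst (tree_metric T w S)) (meps S)).
Qed.

Lemma stoch_safety_radius_of_rate (M : method R) (M_meas : method_measurable M)
    (n : nat) (rho eta s t : R) :
  linf_safety_radius M n rho -> 0 < rho -> 0 < s -> 1 <= t -> 0 < eta ->
  ((2 <= n)%N -> ln (t / eta) <= ((1 - t ^-2) * (rho / s) ^+ 2 / 2 - 2) * ln n%:R) ->
  stoch_safety_radius M eta n s.
Proof.
move=> safe rho0 s0 t1 eta0 rate X T w Xn Tbin wpos c c0 cs dO Om P eps [meps [heps _]].
set E := [set om | _].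
have small om : (forall S, (`|eps S om|%:E < rho%:E * wmin T w)%E) -> E om.
  exact: recovery_of_small_errors safe Xn Tbin wpos.
have sure : (forall om, E om) -> ((1 - eta)%:E <= P E)%E.
  move=> allE; rewrite (_ : E = setT); last by apply/seteqP; split.
  by rewrite probability_setT lee_fin; lra.
have [wI | [W W0 wW]] := wmin_pinfty_or_gt0 wpos.
  by apply: sure => om; apply: small => S; rewrite wI muleC gt0_mulye ?ltry.
have [n1 | n2] := leqP n 1.
  by apply: sure => om; apply: small => S; case: (pair2_void _ S); rewrite Xn.
move: cs; rewrite wW -EFinM lte_fin => cs.
set b := t * expR (- (1 - t ^-2) * (rho * W / Num.sqrt (c ^+ 2 / ln n%:R)) ^+ 2 / 2).
pose Big := [set x : R | rho * W <= `|x|].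
have mF S : measurable (eps S @^-1` Big).
  by rewrite -[_ @^-1` _]setTI; exact: meps S measurableT _ (measurable_norm_ge _).
have FE : ~` (\bigcup_S eps S @^-1` Big) `<=` E.
  move=> om /= nBig; apply: small => S; rewrite wW -EFinM lte_fin ltNge.
  by apply/negP => big; apply: nBig; exists S.
have Pb S : (P (eps S @^-1` Big) <= b%:E)%E.
  move: (heps S Big (measurable_norm_ge _)); rewrite Xn => ->.
  apply: normal_prob0_tail_le => //; last by rewrite mulr_ge0 // ltW.
  by rewrite sqrtr_gt0 divr_gt0 ?exprn_gt0 // ln_gt0 // ltr1n.
apply: le_trans _ (prob_setCU_ge mF (measurable_recovery_event w M_meas meps) FE Pb).
rewrite lee_fin lerD2l lerN2.
by apply: card_mul_normal_tail_le (rate n2) => //; rewrite -Xn card_pair2_le.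
Qed.

Lemma stoch_safety_radius_exists (M : method R) (M_meas : method_measurable M)
    (n : nat) (rho eta : R) :
  linf_safety_radius M n rho -> 0 < rho -> 0 < eta ->
  exists s : R, 0 < s /\ stoch_safety_radius M eta n s.
Proof.
move=> safe rho0 eta0.
set q := ln (2 / eta) / ln n%:R.
pose B := 1 + 8 / 3 * (2 + `|q|).
have B1 : 1 <= B by rewrite lerDl mulr_ge0 // addr_ge0.
have B0 : 0 < B by lra.
exists (rho / B); split; first by rewrite divr_gt0.
apply: (stoch_safety_radius_of_rate (t := 2) M_meas safe rho0 _ _ eta0) => [||n2].
- by rewrite divr_gt0.
- by rewrite ler1n.
have L0 : 0 < ln (n%:R : R) by rewrite ln_gt0 // ltr1n.
have -> : (1 - 2 ^-2) * (rho / (rho / B)) ^+ 2 / 2 - 2 = 3 / 8 * B ^+ 2 - 2.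
  by field; rewrite !gt_eqF.
have lnq : ln (2 / eta) <= `|q| * ln n%:R.
  by rewrite -[leLHS](divfK (lt0r_neq0 L0)) ler_pM2r // ler_norm.
apply: le_trans lnq _; rewrite ler_pM2r //.
have BB : B <= B ^+ 2 by rewrite expr2 ler_peMl // ltW.
have BE : B = 1 + 8 / 3 * (2 + `|q|) by [].
lra.
Qed.

Lemma stoch_safety_radius_half_asymptotic (M : method R) (M_meas : method_measurable M)
    (rho : nat -> R) (eta theta : R) :
  (forall n, linf_safety_radius M n (rho n)) -> (forall n, 0 < rho n) ->
  0 < eta -> 0 < theta < 1 ->
  exists N : nat, forall n : nat, (N <= n)%N ->
    stoch_safety_radius M eta n (theta * (rho n / 2)).
Proof.
move=> safe rho0 eta0 /andP[th0 th1].
have v0 : 0 < 1 - theta ^+ 2 by rewrite subr_gt0 expr_lt1 // ltW.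
pose t := (1 - theta ^+ 2)^-1.
have t1 : 1 <= t by rewrite invf_ge1 // lerBlDr lerDl sqr_ge0.
pose y := `|ln (t / eta)| / (2 * (1 - theta ^+ 2)).
exists (Num.truncn (expR y)).+2 => n nN.
have rhon0 := rho0 n.
apply: (stoch_safety_radius_of_rate M_meas (safe n) rhon0 _ t1 eta0) => [|n2].
  by rewrite mulr_gt0 // divr_gt0.
have -> : (1 - t ^-2) * (rho n / (theta * (rho n / 2))) ^+ 2 / 2 - 2 =
          2 * (1 - theta ^+ 2).
  by rewrite /t; field; rewrite !gt_eqF.
have Ly : y <= ln n%:R.
  rewrite -[y]expRK ler_ln ?posrE ?expR_gt0 ?ltr0n ?(ltn_trans _ n2) //.
  apply: le_trans (ltW (truncnS_gt _)) _.
  by rewrite ler_nat (leq_trans (leqnSn _) nN).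
apply: le_trans (ler_norm _) _.
by rewrite -ler_pdivrMl ?mulr_gt0 // mulrC.
Qed.

End stochastic_safety.

Theorem proposition2 (R : realType) (M : method R)
  (M_meas : method_measurable M)
  (rho : nat -> R) (rho_pos : forall n, 0 < rho n)
  (M_safe : forall n, linf_safety_radius M n (rho n)) :
  (forall eta : R, 0 < eta -> forall n : nat,
     exists s : R, 0 < s /\ stoch_safety_radius M eta n s) /\
  (forall eta : R, 0 < eta -> forall theta : R, 0 < theta < 1 ->
     exists N : nat, forall n : nat, (N <= n)%N ->
       stoch_safety_radius M eta n (theta * (rho n / 2))).
Proof.
split=> [eta eta0 n | eta eta0 theta theta01].
- exact: (stoch_safety_radius_exists M_meas (M_safe n) (rho_pos n) eta0).
- exact: (stoch_safety_radius_half_asymptotic M_meas M_safe rho_pos eta0 theta01).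
Qed.
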